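(* For all positive integers $n\geq 2$ and $t$, the Roman domination number of $S(K_n,t)$ is $$\gamma_R(S(K_n,t))=\begin{cases}2\left\lceil\frac{n^t}{n+1}\right\rceil & \text{if } t \text{ is odd},\\[2pt] 2\left\lceil\frac{n^t}{n+1}\right\rceil-1 & \text{if } t \text{ is even}.\end{cases}$$
   Context: For a positive integer $n$ let $[n]=\{1,\dots,n\}$. For positive integers $n,t$, the Sierpiński graph $S(K_n,t)$ is the simple graph with vertex set $[n]^t$ (words $v_1v_2\cdots v_t$ with $v_i\in[n]$), in which $u_1\cdots u_t$ and $v_1\cdots v_t$ are adjacent if and only if there is $s\in[t]$ with $u_j=v_j$ for all $j<s$, $u_s\neq v_s$, and $u_j=v_s$ and $v_j=u_s$ for all $j>s$. A Roman dominating function on a graph $G=(V,E)$ is a function $f:V\to\{0,1,2\}$ such that every vertex $u$ with $f(u)=0$ has a neighbor $v$ with $f(v)=2$. Its weight is $\sum_{v\in V}f(v)$, and the Roman domination number $\gamma_R(G)$ is the minimum weight of a Roman dominating function on $G$. *)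

From mathcomp Require Import all_boot.
Set Implicit Arguments. Unset Strict Implicit. Unset Printing Implicit Defensive.

(* Vertices of S(K_n,t): words of length t over the alphabet 'I_n
   (letters 0..n-1 stand for 1..n). *)
Definition sier_vertex (n t : nat) := (t.-tuple 'I_n)%type.

Definition sier_adj (n t : nat) (u v : sier_vertex n t) : bool :=
  [exists s : 'I_t,
     [&& [forall j : 'I_t, (j < s) ==> (tnth u j == tnth v j)],
         tnth u s != tnth v s &
         [forall j : 'I_t, (s < j) ==>
            ((tnth u j == tnth v s) && (tnth v j == tnth u s))]]].

Definition roman_dom {V : finType} (adj : rel V) (f : V -> nat) : Prop :=
  (forall v, f v <= 2) /\
  (forall u, f u = 0 -> exists v, adj u v && (f v == 2)).

Definition rd_weight {V : finType} (f : V -> nat) : nat := \sum_(v : V) f v.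

Definition is_roman_domination_number {V : finType} (adj : rel V) (w : nat) : Prop :=
  (exists f : V -> nat, roman_dom adj f /\ rd_weight f = w) /\
  (forall f : V -> nat, roman_dom adj f -> w <= rd_weight f).

Definition ceil_div (a b : nat) : nat := (a + b - 1) %/ b.

From mathcomp Require Import all_boot zify.
Set Implicit Arguments. Unset Strict Implicit. Unset Printing Implicit Defensive.

(* Let N = n^t.  As n = -1 modulo n+1, (n+1) divides N+1 when t is odd and
   N-1 when t is even; the claimed values are 2(N+1)/(n+1) and
   2(N-1)/(n+1) + 1 respectively.

   Every vertex has at most n neighbours.  If a Roman
   dominating function takes the value 2 on a vertices and 1 on b vertices,
   the vertices of value 0 are neighbours of the a vertices of value 2, hence
   N <= (n+1) a + b, and minimising the weight 2a + b under this constraint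
   gives the claimed value (this is pure arithmetic).

   S(K_n,t+1) is made of n copies a.S(K_n,t), and the copies
   a and b are joined by the single edge ab^t -- ba^t.  Following this
   recursion, a finite automaton [code] describes four families of vertex
   sets; by induction on t, alternating parities, they dominate the whole
   graph or all vertices but one extreme vertex, and their sizes obey a linear
   recurrence whose closed form matches the claimed values: for odd t we put
   2 on a dominating set of size (N+1)/(n+1), for even t we put 2 on a set of
   size (N-1)/(n+1) dominating all vertices but x^t and 1 on x^t. *)

Lemma ceil_divE a b k : 0 < b -> a <= b * k < a + b -> ceil_div a b = k.
Proof.
move=> b_gt0 /andP[lo hi]; rewrite /ceil_div.
have -> : a + b - 1 = k * b + (a + b - 1 - b * k) by lia.
by rewrite divnMDl // divn_small ?addn0 //; lia.
Qed.

Lemma sum_tuple_cons (T : finType) t (F : t.+1.-tuple T -> nat) :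
  \sum_(u : t.+1.-tuple T) F u = \sum_(a : T) \sum_(w : t.-tuple T) F [tuple of a :: w].
Proof.
rewrite pair_big /= (reindex (fun p : T * t.-tuple T => [tuple of p.1 :: p.2])) //=.
exists (fun u => (thead u, behead_tuple u)) => [[a w] _ | u _].
  by congr pair; apply: val_inj.
by case/tupleP: u => a w; apply: val_inj.
Qed.

Section RomanDomination.
Variables (V : finType) (adj : rel V).

Lemma roman_dom_of_dominating_set (C S : pred V) :
  (forall u, C u -> ~~ S u) ->
  (forall u, ~~ C u -> ~~ S u -> exists v, adj u v && C v) ->
  roman_dom adj (fun u => 2 * C u + S u) /\
  rd_weight (fun u => 2 * C u + S u) = 2 * (\sum_u C u) + \sum_u S u.
Proof.
move=> CS dom; split; last by rewrite /rd_weight big_split /= big_distrr.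
split=> u; first by case: (boolP (C u)) => [/CS /negbTE -> | _] //; case: (S u).
case: (boolP (C u)) => Cu //; case: (boolP (S u)) => Su //= _.
have [v /andP[uv Cv]] := dom u Cu Su.
by exists v; rewrite uv Cv (negbTE (CS v Cv)).
Qed.

Lemma roman_weight_lower (d : nat) (f : V -> nat) :
  (forall v, #|[set u | adj u v]| <= d) -> roman_dom adj f ->
  exists a b, rd_weight f = 2 * a + b /\ #|V| <= d.+1 * a + b.
Proof.
move=> deg [f_le2 f_dom].
pose cnt k := \sum_u (f u == k : nat).
have card_V : #|V| = cnt 0 + cnt 1 + cnt 2.
  rewrite -sum1_card -!big_split /=; apply: eq_bigr => u _.
  by move: (f_le2 u); case: (f u) => [|[|[|]]].
have zeros : cnt 0 <= d * cnt 2.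
  apply: (@leq_trans (\sum_u \sum_v ((f v == 2) && adj u v : nat))).
    apply: leq_sum => u _; case: eqP => [/f_dom [v /andP [uv fv]]|] //.
    by rewrite (bigD1 v) //= uv fv leq_addr.
  rewrite exchange_big /= big_distrr /=; apply: leq_sum => v _.
  under eq_bigr do rewrite andbC -mulnb.
  rewrite -big_distrl /= leq_mul //; apply: leq_trans (deg v).
  rewrite -sum1_card [X in _ <= X]big_mkcond /=.
  by apply: leq_sum => u _; rewrite inE; case: adj.
exists (cnt 2), (cnt 1); split; last by lia.
rewrite /rd_weight big_distrr -big_split /=; apply: eq_bigr => u _.
by move: (f_le2 u); case: (f u) => [|[|[|]]].
Qed.
End RomanDomination.

Section Sierpinski.
Variable n : nat.

Lemma sier_adjP t (u v : t.-tuple 'I_n) :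
  reflect (exists s : 'I_t,
             [/\ forall j : 'I_t, j < s -> tnth u j = tnth v j,
                 tnth u s != tnth v s &
                 forall j : 'I_t, s < j -> tnth u j = tnth v s /\ tnth v j = tnth u s])
          (sier_adj u v).
Proof.
apply: (iffP existsP) => [[s /and3P[/forallP prefix diff /forallP suffix]] |
                          [s [prefix diff suffix]]]; exists s.
  split=> // j js; first by apply/eqP; move/implyP: (prefix j); apply.
  by move/implyP: (suffix j) => /(_ js) /andP[/eqP -> /eqP ->].
apply/and3P; split=> //; apply/forallP => j; apply/implyP => js.
  by rewrite prefix.
by have [-> ->] := suffix j js; rewrite !eqxx.
Qed.

Lemma eq_nseq_tuple t (u : t.-tuple 'I_n) (b : 'I_n) :
  (u == nseq_tuple t b) = [forall j, tnth u j == b].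
Proof.
apply/eqP/forallP => [-> j | u_b]; first by rewrite tnth_nseq.
by apply: eq_from_tnth => j; rewrite tnth_nseq; apply/eqP.
Qed.

Lemma sier_adj_cons t (a b : 'I_n) (u v : t.-tuple 'I_n) :
  sier_adj [tuple of a :: u] [tuple of b :: v] =
  [&& a != b, u == nseq_tuple t b & v == nseq_tuple t a] || (a == b) && sier_adj u v.
Proof.
rewrite !eq_nseq_tuple; apply/sier_adjP/orP.
  move=> [s [prefix diff suffix]]; case: (unliftP ord0 s) => [s'|] Es; subst s.
    right; apply/andP; split.
      by have := prefix ord0; rewrite !tnth0 lift0 => ->.
    apply/sier_adjP; exists s'; rewrite !tnthS in diff; split=> // j js.
      by have := prefix (lift ord0 j); rewrite !tnthS !lift0 ltnS; apply.
    by have := suffix (lift ord0 j); rewrite !tnthS !lift0 ltnS; apply.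
  left; rewrite !tnth0 in diff; rewrite diff /=.
  apply/andP; split; apply/forallP => j; have [u_j v_j] := suffix (lift ord0 j) isT;
    rewrite !tnthS !tnth0 in u_j v_j; by rewrite ?u_j ?v_j.
move=> [/and3P[ab /forallP u_b /forallP v_a] | /andP[/eqP <- /sier_adjP[s [prefix diff suffix]]]].
  exists ord0; split=> [j //||j]; first by rewrite !tnth0.
  case: (unliftP ord0 j) => [j'|] -> // _.
  by rewrite !tnthS !tnth0 (eqP (u_b j')) (eqP (v_a j')).
exists (lift ord0 s); rewrite !tnthS; split=> // j;
  case: (unliftP ord0 j) => [j'|] -> //; rewrite !lift0 ltnS !tnthS; [exact: prefix | exact: suffix].
Qed.

Lemma sier_adj_cons_same t (a : 'I_n) (u v : t.-tuple 'I_n) :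
  sier_adj u v -> sier_adj [tuple of a :: u] [tuple of a :: v].
Proof. by move=> uv; rewrite sier_adj_cons eqxx uv orbT. Qed.

Lemma sier_adj_cons_swap t (a b : 'I_n) : a != b ->
  sier_adj [tuple of a :: nseq_tuple t b] [tuple of b :: nseq_tuple t a].
Proof. by move=> ab; rewrite sier_adj_cons ab !eqxx. Qed.

Definition neighbours t (v : t.-tuple 'I_n) : {set t.-tuple 'I_n} :=
  [set u | sier_adj u v].

(* The letters c such that v = c^t: a single one for the extreme vertices of
   S(K_n,t), none for the other vertices when t > 0, all letters when t = 0. *)
Definition extreme_letters t (v : t.-tuple 'I_n) : {set 'I_n} :=
  [set c | v == nseq_tuple t c].

Lemma extreme_letters_cons t (a : 'I_n) (w : t.-tuple 'I_n) :
  #|extreme_letters [tuple of a :: w]| <= (a \in extreme_letters w).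
Proof.
have sub : extreme_letters [tuple of a :: w] \subset [set a] :&: extreme_letters w.
  apply/subsetP => c; rewrite !inE -!(inj_eq val_inj) /= eqseq_cons.
  by case/andP=> /eqP -> ->; rewrite eqxx.
apply: leq_trans (subset_leq_card sub) _; case: (boolP (a \in _)) => a_ext.
  by rewrite /= -(cards1 a) subset_leq_card ?subsetIl.
rewrite /= leqn0 cards_eq0; apply/eqP/setP => c.
rewrite !inE; case: (c =P a) => // ->.
by move: a_ext; rewrite inE => /negbTE.
Qed.

Lemma neighbours_cons t (a : 'I_n) (w : t.-tuple 'I_n) :
  neighbours [tuple of a :: w] \subset
    [set [tuple of a :: u] | u : t.-tuple _ in neighbours w] :|:
    [set [tuple of c :: nseq_tuple t a] | c in extreme_letters w :\ a].
Proof.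
apply/subsetP => u; case/tupleP: u => c u; rewrite !inE sier_adj_cons.
case/orP => [/and3P[ca /eqP -> wc] | /andP[/eqP -> uw]]; apply/orP.
  by right; apply/imsetP; exists c; rewrite // !inE ca.
by left; apply/imsetP; exists u; rewrite ?inE.
Qed.

(* Degree bound, strengthened for the induction: deg v + |extreme_letters v| <= n. *)
Lemma neighbours_extreme_card t (v : t.-tuple 'I_n) :
  #|neighbours v| + #|extreme_letters v| <= n.
Proof.
elim: t v => [|t IH] v.
  rewrite (_ : neighbours v = set0) ?cards0; last first.
    by apply/setP => u; rewrite !inE; apply/existsP => -[[]].
  by rewrite add0n; apply: leq_trans (max_card _) _; rewrite card_ord.
case/tupleP: v => a w.
have cons_inj : injective (fun u : t.-tuple 'I_n => [tuple of a :: u]).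
  by move=> u1 u2 /(congr1 val) [/val_inj].
apply: leq_trans (IH w); rewrite [#|extreme_letters w|](cardsD1 a) addnCA addnC.
apply: leq_add; first exact: extreme_letters_cons.
apply: leq_trans (subset_leq_card (neighbours_cons a w)) _.
apply: leq_trans (leq_card_setU _ _) _.
by rewrite card_imset //; apply: leq_add => //; apply: leq_imset_card.
Qed.

Lemma neighbours_card t (v : t.-tuple 'I_n) : #|neighbours v| <= n.
Proof. exact: leq_trans (leq_addr _ _) (neighbours_extreme_card v). Qed.

Fixpoint code (X : bool) (o : option 'I_n) (w : seq 'I_n) : bool :=
  match w, o with
  | [::], _ => X
  | a :: w', None => code X (Some a) w'
  | a :: w', Some i => if a == i then code X None w' else code (~~ X) (Some i) w'
  end.

Definition dominated t (C : pred (seq 'I_n)) (u : t.-tuple 'I_n) : Prop :=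
  exists2 v : t.-tuple 'I_n, C v & (v == u) || sier_adj u v.

Lemma dominated_self t (C : pred (seq 'I_n)) (u : t.-tuple 'I_n) : C u -> dominated C u.
Proof. by exists u; rewrite ?eqxx. Qed.

Lemma dominated_adj t (C : pred (seq 'I_n)) (u : t.-tuple 'I_n) :
  dominated C u -> ~~ C u -> exists v, sier_adj u v && C v.
Proof. by move=> [v Cv /orP[/eqP <- | uv]]; [rewrite Cv | exists v; rewrite uv]. Qed.

Lemma dominated_cons t (C C' : pred (seq 'I_n)) (a : 'I_n) (w : t.-tuple 'I_n) :
  (forall v : t.-tuple 'I_n, C' v -> C (a :: v)) ->
  dominated C' w -> dominated C [tuple of a :: w].
Proof.
move=> CC' [v C'v vw]; exists [tuple of a :: v]; first exact: CC'.
case/orP: vw => [/eqP -> | wv]; first by rewrite eqxx.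
by rewrite sier_adj_cons_same ?orbT.
Qed.

Definition even_invariant t : Prop := [/\
  forall j, code true None (nseq t j),
  forall u : t.-tuple 'I_n, dominated (code true None) u,
  forall i j, ~~ code false (Some i) (nseq t j) &
  forall i (u : t.-tuple 'I_n), u != nseq_tuple t i -> dominated (code false (Some i)) u].

Definition odd_invariant t : Prop := [/\
  forall i j, code true (Some i) (nseq t j) = (j == i),
  forall i (u : t.-tuple 'I_n), dominated (code true (Some i)) u,
  forall j, ~~ code false None (nseq t j) &
  forall u : t.-tuple 'I_n, (forall j, u != nseq_tuple t j) ->
    dominated (code false None) u].

Lemma even_invariant0 : even_invariant 0.
Proof.
split=> // [u | i u]; first by apply: dominated_self; rewrite tuple0.
by rewrite tuple0 (tuple0 (nseq_tuple 0 i)) eqxx.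
Qed.

Lemma odd_to_even_invariant t : odd_invariant t -> even_invariant t.+1.
Proof.
move=> [Ocode Odom Onocode Odom'].
split=> [j | u | i j | i u].
- by rewrite /= Ocode.
- case/tupleP: u => a w; apply: dominated_cons (Odom a w) => v; exact.
- by rewrite /=; case: eqP => [-> | /eqP ji]; rewrite ?Onocode // Ocode (negbTE ji).
case/tupleP: u => a w; case: (eqVneq a i) => [<- ui | ai _].
  case: (boolP [exists j, w == nseq_tuple t j]) => [/existsP[j /eqP wj] | /existsP nw].
    (* the vertex a j^t is dominated through the bridge to j a^t *)
    have ja : j != a by apply: contra_neq ui => ja; rewrite wj ja; apply: val_inj.
    exists [tuple of j :: nseq_tuple t a]; first by rewrite /= (negbTE ja) Ocode.
    by rewrite wj sier_adj_cons_swap ?orbT // eq_sym.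
  apply: dominated_cons (Odom' w _) => [v|j]; first by rewrite /= eqxx.
  by apply/negP => wj; apply: nw; exists j.
apply: dominated_cons (Odom i w) => v; by rewrite /= (negbTE ai).
Qed.

Lemma even_to_odd_invariant t : even_invariant t -> odd_invariant t.+1.
Proof.
move=> [Ecode Edom Enocode Edom'].
split=> [i j | i u | j | u nu].
- by rewrite /=; case: (eqVneq j i) => [-> | ji]; rewrite ?Ecode // (negbTE (Enocode i j)).
- case/tupleP: u => a w; case: (eqVneq a i) => [-> | ai].
    by apply: dominated_cons (Edom w) => v; rewrite /= eqxx.
  case: (eqVneq w (nseq_tuple t i)) => [-> | wi].
    (* the vertex a i^t is dominated through the bridge to i a^t *)
    exists [tuple of i :: nseq_tuple t a]; first by rewrite /= eqxx Ecode.
    by rewrite sier_adj_cons_swap ?orbT.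
  by apply: dominated_cons (Edom' i w wi) => v; rewrite /= (negbTE ai).
- by rewrite /= (negbTE (Enocode j j)).
case/tupleP: u nu => a w nu.
have wa : w != nseq_tuple t a by apply: contra_neq (nu a) => ->; apply: val_inj.
by apply: dominated_cons (Edom' a w wa) => v; exact.
Qed.

Lemma code_invariant t : if odd t then odd_invariant t else even_invariant t.
Proof.
elim: t => [|t IH]; first exact: even_invariant0.
by rewrite /=; case: (odd t) IH; [apply: odd_to_even_invariant | apply: even_to_odd_invariant].
Qed.

(* Number of accepted words of length t, from parity bit X, with a pending
   letter or not. *)
Fixpoint code_size (t : nat) (X pending : bool) : nat :=
  if t is t'.+1 then
    if pending then code_size t' X false + (n - 1) * code_size t' (~~ X) true
    else n * code_size t' X true
  else X.

Lemma code_sizeE t X (o : option 'I_n) :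
  \sum_(u : t.-tuple 'I_n) code X o u = code_size t X (isSome o).
Proof.
elim: t X o => [|t IH] X o.
  rewrite (eq_bigr (fun _ => nat_of_bool X)) => [|u _]; last by rewrite tuple0; case: o.
  by rewrite sum_nat_const card_tuple expn0 mul1n; case: o.
rewrite sum_tuple_cons; case: o => [i|] /=; last first.
  by rewrite (eq_bigr _ (fun a _ => IH X (Some a))) /= sum_nat_const card_ord.
rewrite (bigD1 i) //= eqxx IH; congr addn.
rewrite (eq_bigr (fun _ => code_size t (~~ X) true)) => [|a /negbTE ->]; last exact: IH.
by rewrite sum_nat_const cardC1 card_ord subn1.
Qed.

Lemma code_size_closed t : 0 < n ->
  if odd t then (n + 1) * code_size t true true = n ^ t + 1 /\
                (n + 1) * code_size t false false + n = n ^ t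
  else (n + 1) * code_size t false true + 1 = n ^ t /\
       (n + 1) * code_size t true false = n ^ t + n.
Proof.
move=> n_gt0; elim: t => [|t IH]; first by split; rewrite /=; lia.
rewrite /= expnS; case: (odd t) IH => /= -[IH1 IH2]; split; nia.
Qed.

Section RomanNumber.
Variable t : nat.
Hypothesis n_ge2 : 2 <= n.

Let n_gt0 : 0 < n. Proof. exact: ltnW. Qed.

Definition roman_value : nat :=
  if odd t then 2 * code_size t true true else 2 * code_size t false true + 1.

Lemma roman_valueE :
  (if odd t then 2 * ceil_div (n ^ t) (n + 1) else 2 * ceil_div (n ^ t) (n + 1) - 1)
  = roman_value.
Proof.
rewrite /roman_value; have := code_size_closed t n_gt0.
case: (odd t) => -[size_eq _].
  by rewrite (@ceil_divE _ _ (code_size t true true)); lia.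
by rewrite (@ceil_divE _ _ (code_size t false true).+1); lia.
Qed.

Lemma sierpinski_roman_upper :
  exists f, roman_dom (@sier_adj n t) f /\ rd_weight f = roman_value.
Proof.
pose x0 : 'I_n := Ordinal n_gt0.
have := code_invariant t; rewrite /roman_value; case: (odd t) => -[_ dom nocode dom'].
  pose C (u : t.-tuple 'I_n) := code true (Some x0) u.
  have [rdf weight] := roman_dom_of_dominating_set (adj := @sier_adj n t) (C := C) (S := pred0)
    (fun _ _ => isT) (fun u Cu _ => dominated_adj (dom x0 u) Cu).
  exists (fun u => 2 * C u + pred0 u); split=> //.
  by rewrite weight code_sizeE big1 ?addn0.
pose C (u : t.-tuple 'I_n) := code false (Some x0) u.
pose S := pred1 (nseq_tuple t x0).
have CS u : C u -> ~~ S u by apply: contraL => /eqP ->; apply: nocode.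
have [rdf weight] := roman_dom_of_dominating_set (adj := @sier_adj n t) CS
  (fun u Cu Su => dominated_adj (dom' x0 u Su) Cu).
exists (fun u => 2 * C u + S u); split=> //.
by rewrite weight code_sizeE (bigD1 (nseq_tuple t x0)) //= eqxx big1 // => u /negbTE ->.
Qed.

Lemma sierpinski_roman_lower f :
  roman_dom (@sier_adj n t) f -> roman_value <= rd_weight f.
Proof.
move=> /(roman_weight_lower (@neighbours_card t)) [a [b [-> card_V]]].
rewrite card_tuple card_ord in card_V.
by rewrite /roman_value; have := code_size_closed t n_gt0; case: (odd t) => -[size_eq _]; nia.
Qed.
End RomanNumber.
End Sierpinski.

Theorem theorem3p2 (n t : nat) (hn : 2 <= n) (ht : 1 <= t) :
  is_roman_domination_number (@sier_adj n t)
    (if odd t then 2 * ceil_div (n ^ t) (n + 1)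
     else 2 * ceil_div (n ^ t) (n + 1) - 1).
Proof.
rewrite roman_valueE //; split; first exact: sierpinski_roman_upper.
exact: sierpinski_roman_lower.
Qed.
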